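(* Consider a single base station serving $N$ static users $\mathrm{UE}_1,\ldots,\mathrm{UE}_N$ over slots $t=1,\ldots,T$. At each slot the base station schedules a transmission (of a fresh packet) to exactly one user. At each slot $t$, the channel state $\mathsf{Ch}_i(t)\in\{0,1\}$ (\textsf{Bad}$=0$, \textsf{Good}$=1$) of each user is chosen by an omniscient adversary, which may choose any of the $2^N$ state vectors at each slot; a scheduled transmission is received successfully iff the scheduled user's channel is \textsf{Good} in that slot, in which case that user's age resets to $1$, while every other age (and the scheduled user's age upon failure) increases by $1$. An online policy decides whom to schedule without any knowledge of current or future channel states (only of past outcomes). The cost of a policy on a channel-state sequence $\sigma\in(\{0,1\}^N)^T$ is $\sum_{t=1}^{T}\sum_{i=1}^{N}h_i(t)$, where $h_i(t)$ is the age of $\mathrm{UE}_i$ at slot $t$. The competitive ratio of an online policy $\mathcal{A}$ is $\eta^{\mathcal{A}}=\sup_{\sigma}\frac{\text{cost of }\mathcal{A}\text{ on }\sigma}{\text{cost of }\mathsf{OPT}\text{ on }\sigma}$, the supremum over all finite-length sequences $\sigma$, where $\mathsf{OPT}$ is the optimal offline policy knowing $\sigma$ in advance. Then the competitive ratio $\eta$ of any online scheduling policy with $N$ users satisfies $\eta\ge \frac{N}{2}+\frac{1}{2N}$. Moreover, for $N=2$ users, $\eta\ge 1.5$. *)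

From HB Require Import structures.
From mathcomp Require Import all_boot all_order all_algebra.
From mathcomp Require Import all_classical all_reals.
From mathcomp Require Import ereal.
Set Implicit Arguments. Unset Strict Implicit. Unset Printing Implicit Defensive.
Import Order.TTheory GRing.Theory Num.Theory.
Local Open Scope classical_set_scope.
Local Open Scope ring_scope.

(* A channel-state sequence: [sigma t i] is Ch_i(t+1) (true = Good, false = Bad).
   Only the first T entries matter for a horizon T. *)
Definition chan (N : nat) := nat -> 'I_N -> bool.

(* An (adaptive, deterministic) decision rule: given the slot index (0-based)
   and the history of past feedback bits (success/failure of each past
   transmission), choose the user to schedule. *)
Definition decision (N : nat) := nat -> seq bool -> 'I_N.

(* State after t slots: (feedback history, ages h_i(t)).  Initial ages h_i(0)=0,
   so that every age at slot 1 equals 1. *)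
Fixpoint run (N : nat) (dec : decision N) (sigma : chan N) (t : nat)
  : seq bool * ('I_N -> nat) :=
  match t with
  | 0 => ([::], fun _ => 0%N)
  | t'.+1 =>
      let st := run dec sigma t' in
      let u := dec t' st.1 in
      let b := sigma t' u in
      (rcons st.1 b, fun j => if (j == u) && b then 1%N else (st.2 j).+1)
  end.

Definition cost (N : nat) (dec : decision N) (sigma : chan N) (T : nat) : nat :=
  (\sum_(1 <= t < T.+1) \sum_(i < N) (run dec sigma t).2 i)%N.

Definition online_policy (N : nat) := seq bool -> 'I_N.

Definition online_dec (N : nat) (pol : online_policy N) : decision N :=
  fun _ hist => pol hist.

(* Offline policy: a fixed schedule chosen knowing sigma in advance. *)
Definition offline_dec (N : nat) (s : nat -> 'I_N) : decision N :=
  fun t _ => s t.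

Definition opt_cost (R : realType) (N : nat) (sigma : chan N) (T : nat) : R :=
  inf [set (cost (offline_dec s) sigma T)%:R | s in [set: nat -> 'I_N]].

Definition competitive_ratio (R : realType) (N : nat) (pol : online_policy N)
  : \bar R :=
  ereal_sup [set r : \bar R | exists (T : nat) (sigma : chan N),
      (0 < T)%N /\
      r = ((cost (online_dec pol) sigma T)%:R / opt_cost R sigma T)%:E].

From mathcomp Require Import all_boot all_order all_algebra.
From mathcomp Require Import all_classical all_reals.
From mathcomp Require Import ereal.
From mathcomp Require Import zify ring lra.
Import Order.TTheory GRing.Theory Num.Theory.
Local Open Scope ring_scope.
Set Implicit Arguments. Unset Strict Implicit.

(* The adversary makes Bad exactly the channel of the user that the online
   policy schedules; since the policy then only ever sees failures, its choice
   at slot t is [pol (nseq t false)], and all N ages grow as t, for a cost of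
   N T(T+1)/2.  Offline, every slot can be a success: serving users in
   least-recently-served order, skipping the front user when it is blocked,
   keeps every age except the front one at most N, for a cost of at most
   T N^2 + T(T+1)/2.  The ratio N(T+1)/(2N^2+T+1) exceeds N/2 + 1/(2N) once
   T >= 2N^2(N^2+1) and equals 3/2 for N = 2, T = 23.  For N = 1 the bound
   is 1, and the ratio is 1 already at T = 1. *)

Section MoveToBack.
Variable T : eqType.
Implicit Types (b i : T) (q : seq T).

Definition served b q : T := if q is h :: u :: _ then (if h == b then u else h) else b.

Definition requeue b q : seq T := rcons (rem (served b q) q) (served b q).

Lemma served_neq b q : uniq q -> (1 < size q)%N -> served b q != b.
Proof.
case: q => [|h [|u r]] //= /andP[hNur _] _; case: ifP => [/eqP <-|/negbT //].
by apply: contra hNur => /eqP ->; rewrite mem_head.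
Qed.

Lemma mem_served b q : (1 < size q)%N -> served b q \in q.
Proof. by case: q => [|h [|u r]] //= _; case: ifP; rewrite !inE eqxx ?orbT. Qed.

Lemma perm_requeue b q : (1 < size q)%N -> perm_eq (requeue b q) q.
Proof.
move=> q2; rewrite /requeue perm_rcons perm_sym.
exact: perm_to_rem (mem_served b q2).
Qed.

Lemma index_requeue_served b q : uniq q -> (1 < size q)%N ->
  index (served b q) (requeue b q) = (size q).-1.
Proof.
move=> uq q2; rewrite /requeue -cats1 index_cat mem_rem_uniqF //= eqxx addn0.
exact: size_rem (mem_served b q2).
Qed.

Lemma index_requeue b q i : uniq q -> (1 < size q)%N -> i \in q ->
  i != served b q -> (0 < index i (requeue b q))%N ->
  index i q = (index i (requeue b q)).+1.
Proof.
move=> uq q2 iq iNx; rewrite /requeue -cats1 index_cat.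
have -> : i \in rem (served b q) q by rewrite (mem_rem_uniq _ uq) inE iNx.
move: uq q2 iq iNx; case: q => [|h [|u r]] //= /andP[hNur _] _.
have hNu : (h == u) = false.
  by apply: negbTE; apply: contra hNur => /eqP ->; rewrite mem_head.
case: (eqVneq h b) => [_|_] iq iNx; rewrite ?eqxx ?hNu /=.
  by case: (h =P i) => // _; rewrite [u == i]eq_sym (negbTE iNx).
by rewrite [h == i]eq_sym (negbTE iNx).
Qed.

End MoveToBack.

Lemma run_age_le N (dec : decision N) sigma t i : ((run dec sigma t).2 i <= t)%N.
Proof. by elim: t => //= t IH; case: ifP. Qed.

Lemma cost1 N (dec : decision N) sigma : cost dec sigma 1 = N.
Proof.
rewrite /cost big_nat1 /=.
under eq_bigr do rewrite if_same.
by rewrite sum_nat_const card_ord muln1.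
Qed.

Lemma cost_gt0 N (dec : decision N) sigma T : (0 < N)%N -> (0 < T)%N ->
  (0 < cost dec sigma T)%N.
Proof.
move=> N0 T0; rewrite /cost big_ltn // (bigD1 (Ordinal N0)) //=.
by case: ifP.
Qed.

Section OptCost.
Variables (R : realType) (N : nat) (sigma : chan N) (T : nat).

Lemma opt_cost_le (s : nat -> 'I_N) :
  opt_cost R sigma T <= (cost (offline_dec s) sigma T)%:R.
Proof. by apply: ge_inf; [exists 0 => _ [s' _ <-] | exists s]. Qed.

Lemma opt_cost_gt0 : (0 < N)%N -> (0 < T)%N -> 0 < opt_cost R sigma T.
Proof.
move=> N0 T0; apply: (@lt_le_trans _ _ 1) => //.
apply: lb_le_inf => [|_ [s _ <-]]; last by rewrite ler1n cost_gt0.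
by exists (cost (offline_dec (fun=> Ordinal N0)) sigma T)%:R, (fun=> Ordinal N0).
Qed.

End OptCost.

Lemma competitive_ratio_ge_ratio (R : realType) N (pol : online_policy N)
    (sigma : chan N) (s : nat -> 'I_N) T a b :
  (0 < N)%N -> (0 < T)%N -> (0 < b)%N ->
  (a * cost (offline_dec s) sigma T <= b * cost (online_dec pol) sigma T)%N ->
  ((a%:R / b%:R : R)%:E <= competitive_ratio R pol)%E.
Proof.
move=> N0 T0 b0 le_ab.
apply: le_trans (ereal_sup_ubound _); last by exists T, sigma.
rewrite lee_fin ler_pdivrMr ?ltr0n // mulrAC ler_pdivlMr ?opt_cost_gt0 //.
apply: le_trans (ler_wpM2l (ler0n _ a) (opt_cost_le R sigma T s)) _.
by rewrite -!natrM ler_nat [X in (_ <= X)%N]mulnC.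
Qed.

Lemma competitive_ratio_ge1 (R : realType) N (pol : online_policy N) :
  (0 < N)%N -> (1%:E <= competitive_ratio R pol)%E.
Proof.
move=> N0.
have := @competitive_ratio_ge_ratio R N pol (fun _ _ => true) (fun=> Ordinal N0) 1 1 1.
by rewrite !cost1 divr1 => ->.
Qed.

Definition blocking_chan N (blk : nat -> 'I_N) : chan N := fun t i => i != blk t.

Section OnlineAgainstBlocking.
Variables (N : nat) (pol : online_policy N).

Definition blocked t : 'I_N := pol (nseq t false).

Let run_online t := run (online_dec pol) (blocking_chan blocked) t.

Lemma history_online_blocked t : (run_online t).1 = nseq t false.
Proof.
elim: t => //= t IH.
by rewrite /online_dec IH /blocking_chan /blocked eqxx -cats1 -(nseqD t 1) addn1.
Qed.

Lemma age_online_blocked t i : (run_online t).2 i = t.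
Proof.
elim: t => //= t IH; rewrite /online_dec.
by rewrite history_online_blocked /blocking_chan /blocked eqxx andbF IH.
Qed.

Lemma cost_online_blocked T :
  cost (online_dec pol) (blocking_chan blocked) T = (N * \sum_(1 <= t < T.+1) t)%N.
Proof.
rewrite /cost big_distrr; apply: eq_bigr => t _.
under eq_bigr do rewrite age_online_blocked.
by rewrite sum_nat_const card_ord.
Qed.

End OnlineAgainstBlocking.

Section QueueSchedule.
Variables (N : nat) (blk : nat -> 'I_N).
Hypothesis N_gt1 : (1 < N)%N.

Fixpoint queue t : seq 'I_N :=
  if t is t'.+1 then requeue (blk t') (queue t') else enum 'I_N.

Definition queue_schedule t : 'I_N := served (blk t) (queue t).

Let age t := (run (offline_dec queue_schedule) (blocking_chan blk) t).2.

Lemma perm_queue t : perm_eq (queue t) (enum 'I_N).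
Proof.
elim: t => [|t IH] /=; first exact: perm_refl.
have q2 : (1 < size (queue t))%N by rewrite (perm_size IH) size_enum_ord.
exact: perm_trans (perm_requeue _ q2) IH.
Qed.

Lemma size_queue t : size (queue t) = N.
Proof. by rewrite (perm_size (perm_queue t)) size_enum_ord. Qed.

Lemma queue_uniq t : uniq (queue t).
Proof. by rewrite (perm_uniq (perm_queue t)) enum_uniq. Qed.

Lemma mem_queue t i : i \in queue t.
Proof. by rewrite (perm_mem (perm_queue t)) mem_enum. Qed.

Lemma queue_schedule_unblocked t : queue_schedule t != blk t.
Proof. by apply: served_neq; rewrite ?queue_uniq ?size_queue. Qed.

Lemma age_queue_schedule t i :
  age t.+1 i = if i == queue_schedule t then 1%N else (age t i).+1.
Proof. by rewrite /age /= /offline_dec /blocking_chan queue_schedule_unblocked andbT. Qed.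

Lemma age_index_queue t i :
  (0 < index i (queue t))%N -> (age t i + index i (queue t) <= N)%N.
Proof.
elim: t i => [|t IH] i.
  by move=> _; rewrite add0n -[X in (_ <= X)%N](size_queue 0) index_size.
have [uq q2] : uniq (queue t) /\ (1 < size (queue t))%N by rewrite queue_uniq size_queue.
rewrite age_queue_schedule /=; case: eqP => [->|/eqP iNx] idx_gt0.
  by rewrite index_requeue_served // size_queue add1n prednK // ltnW.
have idx := index_requeue uq q2 (mem_queue t i) iNx idx_gt0.
by rewrite addSnnS -idx IH // idx.
Qed.

Lemma sum_age_queue t : (\sum_(i < N) age t i <= N * N + t)%N.
Proof.
have := size_queue t; have := age_index_queue (t := t).
case: (queue t) => [|h r] age_idx size_q; first by move: N_gt1; rewrite -[X in (1 < X)%N]size_q.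
rewrite (bigD1 h) //= addnC leq_add ?run_age_le //.
rewrite -[X in (_ <= X * _)%N]card_ord -sum_nat_const.
rewrite big_mkcond leq_sum // => i _; case: ifP => // hNi.
have := age_idx i; rewrite /= eq_sym (negbTE hNi) => /(_ isT).
exact: leq_trans (leq_addr _ _).
Qed.

Lemma cost_queue_schedule T :
  (cost (offline_dec queue_schedule) (blocking_chan blk) T
     <= T * (N * N) + \sum_(1 <= t < T.+1) t)%N.
Proof.
apply: (@leq_trans (\sum_(1 <= t < T.+1) (N * N + t))).
  by apply: leq_sum => t _; exact: sum_age_queue.
by rewrite big_split sum_nat_const_nat subn1.
Qed.

End QueueSchedule.

Lemma sum_nat_id_mul2 T : ((\sum_(1 <= t < T.+1) t) * 2 = T * T.+1)%N.
Proof.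
elim: T => [|T IH]; first by rewrite big_geq.
by rewrite big_nat_recr //= mulnDl IH; lia.
Qed.

Lemma competitive_ratio_ge_horizon (R : realType) N (pol : online_policy N) T a b :
  (1 < N)%N -> (0 < T)%N -> (0 < b)%N ->
  (a * (2 * (N * N) + T.+1) <= b * (N * T.+1))%N ->
  ((a%:R / b%:R : R)%:E <= competitive_ratio R pol)%E.
Proof.
move=> N_gt1 T0 b0 le_ab.
apply: (@competitive_ratio_ge_ratio R N pol (blocking_chan (blocked pol))
          (queue_schedule (blocked pol)) T) => //; first exact: ltnW.
rewrite cost_online_blocked.
set S := (\sum_(1 <= t < T.+1) t)%N; set off := cost _ _ _.
have off_le : (off <= T * (N * N) + S)%N by apply: cost_queue_schedule.
have SE : (S * 2 = T * T.+1)%N by apply: sum_nat_id_mul2.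
have NT0 : (0 < N * T.+1)%N by rewrite muln_gt0 ltnW.
rewrite -(leq_pmul2r NT0).
apply: (@leq_trans (a * ((T * (N * N) + S) * (N * T.+1)))).
  by rewrite -mulnA leq_mul2l leq_mul2r off_le !orbT.
have -> : ((T * (N * N) + S) * (N * T.+1) = N * S * (2 * (N * N) + T.+1))%N by nia.
have := leq_mul (leqnn (N * S)) le_ab; lia.
Qed.

Theorem theorem4 (R : realType) (N : nat) (hN : (0 < N)%N)
    (pol : online_policy N) :
  ((N%:R / 2 + 1 / (2 * N%:R) : R)%:E <= competitive_ratio R pol)%E /\
  (N = 2%N -> ((3 / 2 : R)%:E <= competitive_ratio R pol)%E).
Proof.
have [N_gt1|N_le1] := ltnP 1 N; last first.
  have N1 : N = 1%N by apply/eqP; rewrite eqn_leq N_le1 hN.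
  split=> [|N2]; last by rewrite N2 in N_le1.
  apply: le_trans (competitive_ratio_ge1 R pol hN).
  by rewrite lee_fin N1; lra.
split; last first.
  by move=> N2; apply: (@competitive_ratio_ge_horizon R N pol 23) => //; rewrite N2.
set M := (N * N)%N.
have N0 : (N%:R : R) != 0 by rewrite pnatr_eq0 -lt0n.
have -> : (N%:R / 2 + 1 / (2 * N%:R) : R) = (M + 1)%:R / (2 * N)%:R.
  by rewrite /M natrD !natrM; field.
apply: (@competitive_ratio_ge_horizon R N pol (2 * M * (M + 1))) => //.
- by rewrite /M !muln_gt0 hN addn1.
- by rewrite muln_gt0 hN.
- by rewrite /M; nia.
Qed.
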